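(* (i) Let $L,L'$ be simplicial complexes and $\varphi_i,\varphi'_i: L\to L'$ simplicial maps for $i=1,\dots,m$. If $\varphi_i\sim\varphi'_i$ for each $i$, then $\mathrm{SD}(\varphi_1,\dots,\varphi_m)=\mathrm{SD}(\varphi'_1,\dots,\varphi'_m)$. (ii) Let $\varphi_i: L\to L'$ be simplicial maps for $i=1,\dots,m$. If $L$ or $L'$ is strongly collapsible, then $\mathrm{SD}(\varphi_1,\dots,\varphi_m)=0$.
   Context: Simplicial complexes are abstract simplicial complexes; simplicial maps send simplices to simplices. Simplicial maps $f,g: K\to K'$ are contiguous if $f(\sigma)\cup g(\sigma)$ is a simplex of $K'$ for every simplex $\sigma$ of $K$; $f\sim g$ (same contiguity class) if there is a finite chain $f=f_0,\dots,f_n=g$ of simplicial maps with consecutive ones contiguous. For simplicial maps $\varphi_1,\dots,\varphi_m: K\to K'$, the higher contiguity distance $\mathrm{SD}(\varphi_1,\dots,\varphi_m)$ is the least $n\ge0$ such that $K$ is a union of subcomplexes $K_0,\dots,K_n$ with $\varphi_i|_{K_k}\sim\varphi_j|_{K_k}$ for all $i,j\in\{1,\dots,m\}$ and $k=0,\dots,n$. A simplicial complex $L$ is strongly collapsible if it has the same strong homotopy type as a single vertex $v$, i.e. there are simplicial maps $f: L\to\{v\}$, $g:\{v\}\to L$ with $f\circ g\sim 1$ and $g\circ f\sim 1_L$. Complexes are assumed edge-path connected. *)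

From Stdlib Require Import Relations.
From mathcomp Require Import all_boot.
Set Implicit Arguments. Unset Strict Implicit. Unset Printing Implicit Defensive.

(* A (finite) abstract simplicial complex with vertices in a finType V is a
   set K of nonempty finite subsets of V closed under nonempty subsets.
   Its vertices are the v with [set v] \in K. *)
Definition is_complex (V : finType) (K : {set {set V}}) : Prop :=
  (forall s, s \in K -> s != set0) /\
  (forall s t : {set V}, s \in K -> t \subset s -> t != set0 -> t \in K).

Definition subcomplex (V : finType) (K0 K : {set {set V}}) : Prop :=
  is_complex K0 /\ K0 \subset K.

Definition simplicial (V W : finType) (K : {set {set V}}) (K' : {set {set W}})
  (f : V -> W) : Prop :=
  forall s, s \in K -> f @: s \in K'.

Definition contiguous (V W : finType) (K : {set {set V}}) (K' : {set {set W}})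
  (f g : V -> W) : Prop :=
  simplicial K K' f /\ simplicial K K' g /\
  forall s, s \in K -> (f @: s) :|: (g @: s) \in K'.

(* same contiguity class: finite chain of pairwise contiguous maps
   (only the values on vertices of K matter) *)
Definition contig_class (V W : finType) (K : {set {set V}}) (K' : {set {set W}})
  (f g : V -> W) : Prop :=
  clos_refl_trans (V -> W) (contiguous K K') f g.

(* SD(phi_1,...,phi_m) <= n : K is a union of n+1 subcomplexes K_0..K_n
   on each of which all the restrictions phi_i|K_k are in the same class *)
Definition SD_le (V W : finType) (K : {set {set V}}) (K' : {set {set W}})
  (m : nat) (phi : 'I_m -> V -> W) (n : nat) : Prop :=
  exists Ks : 'I_n.+1 -> {set {set V}},
    (forall k, subcomplex (Ks k) K) /\
    K = \bigcup_(k < n.+1) Ks k /\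
    (forall i j k, contig_class (Ks k) K' (phi i) (phi j)).

Definition SD_eq (V W : finType) (K : {set {set V}}) (K' : {set {set W}})
  (m : nat) (phi : 'I_m -> V -> W) (n : nat) : Prop :=
  SD_le K K' phi n /\ (forall n', SD_le K K' phi n' -> n <= n').

Definition edge_connected (V : finType) (K : {set {set V}}) : Prop :=
  forall u w, [set u] \in K -> [set w] \in K ->
    connect (fun a b => [set a; b] \in K) u w.

Definition point_complex : {set {set unit}} := [set [set tt]].

(* strongly collapsible: same strong homotopy type as a single vertex *)
Definition strongly_collapsible (V : finType) (L : {set {set V}}) : Prop :=
  exists (f : V -> unit) (g : unit -> V),
    simplicial L point_complex f /\ simplicial point_complex L g /\
    contig_class point_complex point_complex (f \o g) id /\
    contig_class L L (g \o f) id.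

From mathcomp Require Import all_boot.
From Stdlib Require Import Relations FunctionalExtensionality.
Set Implicit Arguments. Unset Strict Implicit.

(* (i) Contiguity classes are closed under restriction to subcomplexes, so a
   cover witnessing SD(phi) <= n also witnesses SD(phi') <= n: on each piece
   phi'_i ~ phi_i ~ phi_j ~ phi'_j.
   (ii) If L is strongly collapsible, phi_i ~ phi_i o g o f, which is constant
   at the vertex phi_i(g tt); two such constants are joined by an edge path in
   L', and consecutive constants along an edge are contiguous.  If L' is
   strongly collapsible, phi_i ~ g o f o phi_i, which is constant at g tt.
   Either way all phi_i are in one class on L, so one subcomplex suffices. *)

Lemma clos_rt_map (A B : Type) (R : relation A) (S : relation B) (F : A -> B) :
  (forall x y, R x y -> S (F x) (F y)) ->
  forall x y, clos_refl_trans A R x y -> clos_refl_trans B S (F x) (F y).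
Proof.
move=> RS x y; elim=> [a b /RS|a|a b c _ IHab _ IHbc].
- exact: rt_step.
- exact: rt_refl.
- exact: rt_trans IHab IHbc.
Qed.

Lemma clos_rt_sym (A : Type) (R : relation A) :
  (forall x y, R x y -> R y x) ->
  forall x y, clos_refl_trans A R x y -> clos_refl_trans A R y x.
Proof.
move=> Rsym x y; elim=> [a b /Rsym|a|a b c _ IHab _ IHbc].
- exact: rt_step.
- exact: rt_refl.
- exact: rt_trans IHbc IHab.
Qed.

Section Contiguity.

Variables (V W : finType) (K : {set {set V}}) (K' : {set {set W}}).

Lemma contiguous_sym (f g : V -> W) :
  contiguous K K' f g -> contiguous K K' g f.
Proof. by case=> sf [sg sfg]; split; [|split] => // s /sfg; rewrite setUC. Qed.

Lemma contig_class_sym (f g : V -> W) :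
  contig_class K K' f g -> contig_class K K' g f.
Proof. exact/clos_rt_sym/contiguous_sym. Qed.

Lemma contig_class_sub (K0 : {set {set V}}) (f g : V -> W) :
  K0 \subset K -> contig_class K K' f g -> contig_class K0 K' f g.
Proof.
move=> /subsetP sK0K; apply: (clos_rt_map (F := id)) => h h' [sh [sh' shh']].
by split; [|split]; move=> s /sK0K; [apply: sh | apply: sh' | apply: shh'].
Qed.

Lemma contig_class_comp_simplicial (U : finType) (K'' : {set {set U}})
    (p : W -> U) (f g : V -> W) :
  simplicial K' K'' p -> contig_class K K' f g ->
  contig_class K K'' (p \o f) (p \o g).
Proof.
move=> sp; apply: (clos_rt_map (F := fun h => p \o h)) => h h' [sh [sh' shh']].
split; [|split]=> s Ks; rewrite ?(imset_comp p h) ?(imset_comp p h').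
- exact: sp _ (sh s Ks).
- exact: sp _ (sh' s Ks).
- by rewrite -imsetU; apply: sp _ (shh' s Ks).
Qed.

Lemma contig_class_simplicial_comp (U : finType) (K0 : {set {set U}})
    (p : U -> V) (f g : V -> W) :
  simplicial K0 K p -> contig_class K K' f g ->
  contig_class K0 K' (f \o p) (g \o p).
Proof.
move=> sp; apply: (clos_rt_map (F := fun h => h \o p)) => h h' [sh [sh' shh']].
split; [|split]=> s K0s; rewrite ?(imset_comp h p) ?(imset_comp h' p).
- exact: sh _ (sp s K0s).
- exact: sh' _ (sp s K0s).
- exact: shh' _ (sp s K0s).
Qed.

Lemma imset_const (s : {set V}) (a : W) :
  s != set0 -> [set (fun _ : V => a) x | x in s] = [set a].
Proof.
case/set0Pn=> x xs; apply/setP=> y; rewrite in_set1.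
by apply/imsetP/eqP=> [[z _ ->] | ->] //; exists x.
Qed.

Lemma contig_class_const_connect (a b : W) :
  is_complex K -> is_complex K' -> [set a] \in K' ->
  connect (fun u w => [set u; w] \in K') a b ->
  contig_class K K' (fun _ => a) (fun _ => b).
Proof.
move=> [K_nz _] [_ K'_sub] + /connectP [p]; elim: p a => [|c p IHp] a K'a /=.
  by move=> _ ->; apply: rt_refl.
case/andP=> K'ac pc_b b_last.
have K'c : [set c] \in K'.
  apply: (K'_sub _ _ K'ac); first by rewrite sub1set !inE eqxx orbT.
  by apply/set0Pn; exists c; rewrite inE.
apply: rt_trans (IHp c K'c pc_b b_last); apply: rt_step.
by split; [|split]; move=> s Ks; rewrite !imset_const ?K_nz.
Qed.

End Contiguity.

Section ContiguityDistance.

Variables (V W : finType) (L : {set {set V}}) (L' : {set {set W}}) (m : nat).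

Lemma SD_le_contig_class (phi phi' : 'I_m -> V -> W) n :
  (forall i, contig_class L L' (phi i) (phi' i)) ->
  SD_le L L' phi n -> SD_le L L' phi' n.
Proof.
move=> phi_phi' [Ks [Ks_sub [L_cover Ks_contig]]].
exists Ks; split; [|split]=> //; move=> i j k.
have sKL : Ks k \subset L by case: (Ks_sub k).
apply: rt_trans (contig_class_sub sKL (phi_phi' j)).
apply: rt_trans (Ks_contig i j k).
exact/(contig_class_sub sKL)/contig_class_sym.
Qed.

Lemma SD_eq_contig_class (phi phi' : 'I_m -> V -> W) n :
  (forall i, contig_class L L' (phi i) (phi' i)) ->
  SD_eq L L' phi n <-> SD_eq L L' phi' n.
Proof.
move=> phi_phi'.
have phi'_phi i : contig_class L L' (phi' i) (phi i) by apply: contig_class_sym.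
have le_iff n' : SD_le L L' phi n' <-> SD_le L L' phi' n'.
  by split; apply: SD_le_contig_class.
by split=> -[/le_iff SDn SDmin]; split=> // n' /le_iff /SDmin.
Qed.

Lemma SD_eq0 (phi : 'I_m -> V -> W) :
  is_complex L -> (forall i j, contig_class L L' (phi i) (phi j)) ->
  SD_eq L L' phi 0.
Proof.
move=> cL phi_contig; split=> //; exists (fun _ => L).
by rewrite big_ord_recl big_ord0 setU0.
Qed.

Lemma contig_class_collapsible_dom :
  strongly_collapsible L -> exists2 v, [set v] \in L &
    forall phi : V -> W, simplicial L L' phi ->
      contig_class L L' phi (fun _ => phi v).
Proof.
move=> [f [g [_ [sg [_ gf_id]]]]].
exists (g tt); first by rewrite -imset_set1; apply: sg; rewrite inE.
move=> phi sphi; apply: contig_class_sym.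
have -> : (fun _ => phi (g tt)) = phi \o (g \o f).
  by apply: functional_extensionality => x /=; case: (f x).
exact: contig_class_comp_simplicial sphi gf_id.
Qed.

Lemma contig_class_collapsible_codom :
  strongly_collapsible L' -> exists w,
    forall phi : V -> W, simplicial L L' phi ->
      contig_class L L' phi (fun _ => w).
Proof.
move=> [f [g [_ [_ [_ gf_id]]]]]; exists (g tt) => phi sphi.
apply: contig_class_sym.
have -> : (fun _ => g tt) = (g \o f) \o phi.
  by apply: functional_extensionality => x /=; case: (f _).
exact: contig_class_simplicial_comp sphi gf_id.
Qed.

Lemma contig_class_all_collapsible_dom (phi : 'I_m -> V -> W) :
  is_complex L -> is_complex L' -> edge_connected L' ->
  (forall i, simplicial L L' (phi i)) -> strongly_collapsible L ->
  forall i j, contig_class L L' (phi i) (phi j).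
Proof.
move=> cL cL' eL' sphi /contig_class_collapsible_dom [v Lv phi_v] i j.
have L'v k : [set phi k v] \in L' by rewrite -imset_set1; apply: sphi.
apply: rt_trans (phi_v _ (sphi i)) _.
apply: rt_trans (contig_class_sym (phi_v _ (sphi j))).
exact: contig_class_const_connect (L'v i) (eL' _ _ (L'v i) (L'v j)).
Qed.

Lemma contig_class_all_collapsible_codom (phi : 'I_m -> V -> W) :
  (forall i, simplicial L L' (phi i)) -> strongly_collapsible L' ->
  forall i j, contig_class L L' (phi i) (phi j).
Proof.
move=> sphi /contig_class_collapsible_codom [w phi_w] i j.
exact: rt_trans (phi_w _ (sphi i)) (contig_class_sym (phi_w _ (sphi j))).
Qed.

End ContiguityDistance.

Theorem proposition3p5 :
  (forall (V W : finType) (L : {set {set V}}) (L' : {set {set W}})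
     (m : nat) (phi phi' : 'I_m -> V -> W),
     is_complex L -> is_complex L' -> edge_connected L -> edge_connected L' ->
     (forall i, simplicial L L' (phi i)) ->
     (forall i, simplicial L L' (phi' i)) ->
     (forall i, contig_class L L' (phi i) (phi' i)) ->
     forall n, SD_eq L L' phi n <-> SD_eq L L' phi' n)
  /\
  (forall (V W : finType) (L : {set {set V}}) (L' : {set {set W}})
     (m : nat) (phi : 'I_m -> V -> W),
     is_complex L -> is_complex L' -> edge_connected L -> edge_connected L' ->
     (forall i, simplicial L L' (phi i)) ->
     strongly_collapsible L \/ strongly_collapsible L' ->
     SD_eq L L' phi 0).
Proof.
split.
  move=> V W L L' m phi phi' _ _ _ _ _ _ phi_phi' n.
  exact: SD_eq_contig_class.
move=> V W L L' m phi cL cL' _ eL' sphi [colL | colL'].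
- exact/(SD_eq0 cL)/contig_class_all_collapsible_dom.
- exact/(SD_eq0 cL)/contig_class_all_collapsible_codom.
Qed.
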